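(* Let $w\in\mathrm{ACol}(C_n)^*$ be a word of length $t$ (number of letters from $\mathrm{ACol}(C_n)$), and let $s: w=w_0\Rightarrow w_1\Rightarrow\cdots\Rightarrow w_k$ be any finite rewriting sequence in the polygraph $\mathbf{ACol}$, each step being a rewriting step. Then the number of steps of $s$ that apply an $\epsilon$-rule is at most $\frac{t^2(3t+1)}{4}$.
   Context: Setting: $C_n=\{1<\cdots<n<\overline n<\cdots<\overline1\}$; columns, admissible columns, the order $\preceq$ on admissible columns, tableau words, the plactic monoid $Pl(C_n)$ and the column insertion $(c\leftarrow d)$ (the unique tableau word, of at most two admissible columns, equal in $Pl(C_n)$ to $cd$) are as usual for type $C$ (Lecouvey, Kashiwara–Nakashima): $c=x_1\cdots x_k\preceq d=y_1\cdots y_l$ iff $k\ge l$, $x_i\le y_i$ for $i\le l$, and no $(a,b)$-configuration occurs; a tableau word is $c_1\cdots c_k$ with $c_{i+1}\preceq c_i$, and each element of $Pl(C_n)$ has a unique tableau word representative. Let $\mathrm{ACol}(C_n)$ be the set of admissible columns together with an extra symbol $\epsilon$ (the ''empty column''). Let $p:\mathrm{ACol}(C_n)^*\to C_n^*$ be the monoid morphism sending $\epsilon$ to the empty word and each admissible column to itself. Extend $\preceq$ by declaring $c\preceq\epsilon$ for every $c\in\mathrm{ACol}(C_n)$, and $\epsilon\not\preceq c$ for $c\ne\epsilon$. For $c_1,c_2\in\mathrm{ACol}(C_n)$ define $(c_1\leftarrow c_2)\in\mathrm{ACol}(C_n)^2$ to be $d_1d_2$ if the tableau word of $p(c_1)p(c_2)$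 is the two-column word $d_1d_2$, $\epsilon d$ if it is a single column $d$, and $\epsilon\epsilon$ if it is empty. The 2-polygraph $\mathbf{ACol}$ has generators $\mathrm{ACol}(C_n)$ and rewriting rules $c_1c_2\Rightarrow(c_1\leftarrow c_2)$ for all $c_1,c_2$ with $c_2\not\preceq c_1$; a rewriting step is $xc_1c_2y\Rightarrow x(c_1\leftarrow c_2)y$. The $\epsilon$-rules are the rules whose source contains $\epsilon$; these are exactly $c\epsilon\Rightarrow\epsilon c$ for $c\ne\epsilon$. *)

From mathcomp Require Import all_boot.
From Stdlib Require Import Relation_Operators.
Set Implicit Arguments. Unset Strict Implicit. Unset Printing Implicit Defensive.

(* The alphabet C_n = {1 < ... < n < nbar < ... < 1bar} is encoded by the    *)
(* natural numbers 1..2n with their usual order: the unbarred letter i is i, *)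
(* the barred letter ibar is 2n+1-i.                                         *)

Definition letter (n x : nat) : bool := (1 <= x) && (x <= n.*2).
Definition bar (n x : nat) : nat := n.*2.+1 - x.
Definition unbarred (n x : nat) : bool := (1 <= x) && (x <= n).

Definition is_column (n : nat) (c : seq nat) : bool :=
  [&& c != [::], all (letter n) c & sorted ltn c].

Definition Ncount (n : nat) (c : seq nat) (m : nat) : nat :=
  count (fun x => (x <= m) || (bar n m <= x)) c.

Definition admissible (n : nat) (c : seq nat) : bool :=
  is_column n c && all (fun m => Ncount n c m <= m) (iota 1 n).

Definition pair_letters (n : nat) (c : seq nat) : seq nat :=
  rev [seq z <- iota 1 n | (z \in c) && (bar n z \in c)].

(* greatest unbarred letter t < m with t \notin c and tbar \notin c (0 if none) *)
Definition greatest_free (n : nat) (c : seq nat) (m : nat) : nat :=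
  last 0 [seq t <- iota 1 (m.-1) | (t \notin c) && (bar n t \notin c)].

Fixpoint split_ts (n : nat) (c : seq nat) (zs : seq nat) (bound : nat) : seq nat :=
  match zs with
  | [::] => [::]
  | z :: zs' => let t := greatest_free n c (minn bound z) in
                t :: split_ts n c zs' t
  end.

Definition ts_of (n : nat) (c : seq nat) : seq nat :=
  split_ts n c (pair_letters n c) n.+1.

(* lC: replace each z_i by t_i; rC: replace each z_i bar by t_i bar. *)
Definition lcol (n : nat) (c : seq nat) : seq nat :=
  sort leq ([seq x <- c | x \notin pair_letters n c] ++ ts_of n c).
Definition rcol (n : nat) (c : seq nat) : seq nat :=
  sort leq ([seq x <- c | x \notin map (bar n) (pair_letters n c)]
              ++ map (bar n) (ts_of n c)).

(* c = x_1..x_k  ⪯  d = y_1..y_l : k >= l, x_i <= y_i, and no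
   (a,b)-configuration, the latter expressed through Lecouvey's split
   columns: (rc)_i <= (ld)_i for i <= l. *)
Definition col_le (n : nat) (c d : seq nat) : bool :=
  [&& size d <= size c,
      all (fun i => nth 0 c i <= nth 0 d i) (iota 0 (size d)) &
      all (fun i => nth 0 (rcol n c) i <= nth 0 (lcol n d) i) (iota 0 (size d))].

Inductive plactic_rel (n : nat) : seq nat -> seq nat -> Prop :=
| R1a x y z : letter n x -> letter n y -> letter n z ->
    x <= y -> y < z -> z != bar n x -> plactic_rel n [:: y; z; x] [:: y; x; z]
| R1b x y z : letter n x -> letter n y -> letter n z ->
    x < y -> y <= z -> z != bar n x -> plactic_rel n [:: x; z; y] [:: z; x; y]
| R2a x y : 1 < x -> x <= n -> x <= y -> y <= bar n x ->
    plactic_rel n [:: y; bar n x.-1; x.-1] [:: y; x; bar n x]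
| R2b x y : 1 < x -> x <= n -> x <= y -> y <= bar n x ->
    plactic_rel n [:: x; bar n x; y] [:: bar n x.-1; x.-1; y]
| R3 w z :
    is_column n w -> ~~ admissible n w ->
    (forall i j, i < j -> j <= size w -> j - i < size w ->
       admissible n (take (j - i) (drop i w))) ->
    unbarred n z -> z \in w -> bar n z \in w -> Ncount n w z = z.+1 ->
    (forall z', z' < z -> unbarred n z' -> z' \in w -> bar n z' \in w ->
       Ncount n w z' != z'.+1) ->
    plactic_rel n w [seq x <- w | (x != z) && (x != bar n z)].

Definition pl_step (n : nat) (u v : seq nat) : Prop :=
  exists x y l r, plactic_rel n l r /\ u = x ++ l ++ y /\ v = x ++ r ++ y.

Definition pl_eq (n : nat) : seq nat -> seq nat -> Prop :=
  clos_refl_sym_trans (seq nat) (pl_step n).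

Definition tableau_word (n : nat) (cs : seq (seq nat)) : bool :=
  all (admissible n) cs && sorted (fun a b => col_le n b a) cs.

(* generators: None = epsilon (empty column), Some c = admissible column c *)
Definition acol := option (seq nat).

Definition acol_valid (n : nat) (o : acol) : bool :=
  if o is Some c then admissible n c else true.

Definition p_acol (o : acol) : seq nat := if o is Some c then c else [::].
Definition p_word (w : seq acol) : seq nat := flatten (map p_acol w).

Definition acol_le (n : nat) (o1 o2 : acol) : bool :=
  match o1, o2 with
  | _, None => true
  | None, Some _ => false
  | Some c, Some d => col_le n c d
  end.

Definition encode2 (cs : seq (seq nat)) : seq acol :=
  match cs with
  | [::] => [:: None; None]
  | [:: d] => [:: None; Some d]
  | _ => map Some cs
  end.

Definition insertion (n : nat) (c1 c2 o1 o2 : acol) : Prop :=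
  exists cs, tableau_word n cs /\ pl_eq n (flatten cs) (p_acol c1 ++ p_acol c2)
             /\ encode2 cs = [:: o1; o2].

(* uniqueness of tableau word representatives in Pl(C_n) (standing fact) *)
Definition tableau_unique (n : nat) : Prop :=
  forall cs1 cs2, tableau_word n cs1 -> tableau_word n cs2 ->
    pl_eq n (flatten cs1) (flatten cs2) -> cs1 = cs2.

(* a rewriting step x c1 c2 y => x (c1<-c2) y, with flag eps = whether the
   applied rule is an epsilon-rule (its source contains epsilon) *)
Definition rw_step (n : nat) (u v : seq acol) (eps : bool) : Prop :=
  exists x y c1 c2 o1 o2,
    [/\ u = x ++ [:: c1; c2] ++ y, v = x ++ [:: o1; o2] ++ y,
        acol_valid n c1 && acol_valid n c2,
        ~~ acol_le n c2 c1 & insertion n c1 c2 o1 o2]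
    /\ eps = (c1 == None) || (c2 == None).

(* a finite rewriting sequence w = w_0 => w_1 => ... => w_k, given as the
   list of steps (eps-flag_i, w_i), i = 1..k *)
Fixpoint rw_seq (n : nat) (w : seq acol) (s : seq (bool * seq acol)) : Prop :=
  match s with
  | [::] => True
  | (b, v) :: s' => rw_step n w v b /\ rw_seq n v s'
  end.

Definition eps_steps (s : seq (bool * seq acol)) : nat := count fst s.

From mathcomp Require Import all_boot.
From mathcomp Require Import zify.
Set Implicit Arguments. Unset Strict Implicit. Unset Printing Implicit Defensive.

(* Weight a word w of length t by the number of pairs (column, epsilon) with
   the column to the left, plus t times the number of columns.  Since c ⪯ eps,
   the only epsilon-rules are c eps => eps c (by uniqueness of tableau words);
   such a step removes exactly one such pair and keeps the columns; any
   other rule keeps or lowers the number of columns, and if it lowers it by d,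
   the at most t columns to its left gain at most d t pairs, paid for by the
   second term.  So the weight never increases and drops at each epsilon-rule;
   initially it is at most t^2/4 + t^2. *)

Section Inversions.

Variables (T : Type) (p : pred T).

Fixpoint inversions (s : seq T) : nat :=
  if s is x :: s' then (if p x then count (predC p) s' else 0) + inversions s'
  else 0.

Lemma inversions_cat s1 s2 :
  inversions (s1 ++ s2) =
  inversions s1 + inversions s2 + count p s1 * count (predC p) s2.
Proof.
elim: s1 => [|x s1 IH] /=; first lia.
by rewrite IH count_cat; case: (p x) => /=; lia.
Qed.

Lemma inversions_le s : inversions s <= count p s * count (predC p) s.
Proof. by elim: s => [|x s IH] //=; case: (p x) => /=; nia. Qed.

Lemma inversions_all s : all p s -> inversions s = 0.
Proof.
elim: s => [|x s IH] //= /andP[-> ps]; rewrite IH //.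
by move: (count_predC p s) ps; rewrite all_count => <- /eqP; lia.
Qed.

Definition potential (t : nat) (s : seq T) : nat := inversions s + t * count p s.

Lemma potential_replace t x y l r k :
  size x <= t -> size r = size l -> count p r <= count p l ->
  inversions r + k <= inversions l ->
  potential t (x ++ r ++ y) + k <= potential t (x ++ l ++ y).
Proof.
move=> x_le r_size r_count r_inv.
have := count_size p x; have := count_predC p r; have := count_predC p l.
rewrite /potential !inversions_cat !count_cat; nia.
Qed.

Lemma potential_bound s : 4 * potential (size s) s <= size s ^ 2 * (3 * size s + 1).
Proof.
rewrite /potential -(count_predC p s).
have := inversions_le s.
case: (count p s) => [|a]; case: (count (predC p) s) => [|b]; nia.
Qed.

End Inversions.

Lemma inversions_encode2 cs : inversions isSome (encode2 cs) = 0.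
Proof.
case: cs => [|c [|d cs]] //; apply: inversions_all.
by apply/allP => _ /mapP[e _ ->].
Qed.

Lemma insertion_col_eps n c o1 o2 :
  tableau_unique n -> admissible n c -> insertion n (Some c) None o1 o2 ->
  o1 = None /\ o2 = Some c.
Proof.
move=> huniq c_adm [cs [cs_tab [cs_eq cs_enc]]].
have cs_c : cs = [:: c].
  apply: (huniq _ _ cs_tab); first by rewrite /tableau_word /= c_adm.
  by move: cs_eq; rewrite /= !cats0.
by move: cs_enc; rewrite cs_c => -[<- <-].
Qed.

Lemma rw_step_potential n u v b :
  tableau_unique n -> rw_step n u v b ->
  size v = size u /\ potential isSome (size u) v + b <= potential isSome (size u) u.
Proof.
move=> huniq [x [y [c1 [c2 [o1 [o2 [[-> -> c_valid c_gt c_ins] ->]]]]]]].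
split; first by rewrite !size_cat.
have x_le z : size x <= size (x ++ z) by rewrite size_cat leq_addr.
case: c1 c_valid c_gt c_ins => [c|]; last by case: c2.
case: c2 => [d|] /= c_valid _ c_ins.
- case: (c_ins) => cs [_ [_ cs_enc]].
  apply: (potential_replace _ (x_le _) (l := [:: _; _]) (r := [:: _; _])) => //.
  - by case: (o1); case: (o2).
  - by rewrite -cs_enc inversions_encode2.
- have [-> ->] := insertion_col_eps huniq (andP c_valid).1 c_ins.
  exact: (potential_replace _ (x_le _) (l := [:: _; _]) (r := [:: _; _])).
Qed.

Lemma rw_seq_eps_steps n w s :
  tableau_unique n -> rw_seq n w s -> eps_steps s <= potential isSome (size w) w.
Proof.
move=> huniq; elim: s w => [|[b v] s IH] w //= [w_v v_s].
have [v_size v_le] := rw_step_potential huniq w_v.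
by move: (IH v v_s); rewrite v_size /eps_steps /=; lia.
Qed.

Theorem proposition3p1 (n : nat) (n_gt0 : 0 < n) (huniq : tableau_unique n)
  (w : seq acol) (s : seq (bool * seq acol)) :
  all (acol_valid n) w -> rw_seq n w s ->
  4 * eps_steps s <= (size w) ^ 2 * (3 * size w + 1).
Proof.
move=> _ w_s.
apply: leq_trans (potential_bound isSome w).
by rewrite leq_mul2l /= (rw_seq_eps_steps huniq w_s).
Qed.
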